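(* Let $(I^*_{g^*},g^* )$ be a Stackelberg equilibrium and let $\pi^*_{g^*}=\Pi_{g^*}(I^*_{g^*}(X))$. Then the induced contract $(I^*_{g^*},\pi^*_{g^*})$ is individually rational and Pareto optimal, and moreover $\rho^{Pol}(I^*_{g^*},\pi^*_{g^*})=\rho^{Pol}(0,0)$.
   Context: $(\Omega,\mathcal F,\mathbb P)$ is a non-atomic probability space; $X\ge0$ is bounded with range $[0,M]$ and strictly increasing distribution function $F_X$. A distortion function is a non-decreasing differentiable map $h:[0,1]\to[0,1]$ with $h(0)=0$, $h(1)=1$; $\int Y\,\mathrm dh\circ\mathbb P=\int_0^\infty h(\mathbb P(Y\ge y))\mathrm dy+\int_{-\infty}^0[h(\mathbb P(Y\ge y))-1]\mathrm dy$. Policyholder distortion $T$, $\rho^{Pol}(Z)=\int Z\,\mathrm dT\circ\mathbb P$; pricing distortion $g$, $\Pi_g(I(X))=\int I(X)\,\mathrm dg\circ\mathbb P$. $\mathcal I_L=\{I:[0,M]\to[0,M]: I(0)=0,\ 0\le I(x_1)-I(x_2)\le x_1-x_2\ \forall x_2\le x_1\}$; for a mechanism, $\rho^{Pol}(I,g)=\rho^{Pol}(X-I(X)+\Pi_g(I(X)))$ and $V^{In}(I,g)=\Pi_g(I(X))-\mathbb E[I(X)]$. $(I^*,g^* )$ is a Stackelberg equilibrium if (i) $I^*\in\arg\min_{I\in\mathcal I_L}\rho^{Pol}(I,g^* )$ and (ii) $V^{In}(I^*,g^* )\ge V^{In}(I,g)$ for all $(I,g)$ with $I\in\arg\min_{\bar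 I\in\mathcal I_L}\rho^{Pol}(\bar I,g)$. For a contract $(I,\pi)\in\mathcal I_L\times\mathbb R$: $\rho^{Pol}(I,\pi)=\rho^{Pol}(X-I(X)+\pi)$, $V^{In}(I,\pi)=\pi-\mathbb E[I(X)]$. A contract $(I^*,\pi^* )$ is individually rational if $\rho^{Pol}(I^*,\pi^* )\le\rho^{Pol}(0,0)$ and $V^{In}(I^*,\pi^* )\ge V^{In}(0,0)$; it is Pareto optimal if no $(I,\pi)$ has $\rho^{Pol}(I,\pi)\le\rho^{Pol}(I^*,\pi^* )$ and $V^{In}(I,\pi)\ge V^{In}(I^*,\pi^* )$ with at least one strict inequality. *)

From HB Require Import structures.
From mathcomp Require Import all_boot all_order all_algebra.
From mathcomp Require Import all_classical all_reals all_analysis.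
Set Implicit Arguments. Unset Strict Implicit. Unset Printing Implicit Defensive.
Import Order.TTheory GRing.Theory Num.Theory.
Import numFieldNormedType.Exports.
Local Open Scope classical_set_scope.
Local Open Scope ring_scope.

Section Defs.
Context {R : realType} {d : measure_display} {Om : measurableType d}.
Variable P : probability Om R.

Definition nonatomic : Prop :=
  forall A, measurable A -> (0 < P A)%E ->
    exists B, [/\ measurable B, B `<=` A, (0 < P B)%E & (P B < P A)%E].

Definition distortion (h : R -> R) : Prop :=
  [/\ (forall x, 0 <= x <= 1 -> 0 <= h x <= 1),
      (forall x y, 0 <= x -> x <= y -> y <= 1 -> h x <= h y),
      h 0 = 0, h 1 = 1 &
      [/\ (forall x, 0 < x < 1 -> derivable h x 1),
           cvg ((fun t => (h t - h 0) / t) @ 0^'+) &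
           cvg ((fun t => (h t - h 1) / (t - 1)) @ 1^'-)]].

(* Choquet integral  int Y d(h o P)
   = int_0^oo h(P(Y>=y)) dy + int_{-oo}^0 [h(P(Y>=y)) - 1] dy
   (real-valued; all random variables considered below are bounded) *)
Definition choquet (h : R -> R) (Y : Om -> R) : R :=
  fine ((\int[lebesgue_measure]_(y in `[0%R, +oo[)
            (h (fine (P [set w | y <= Y w])))%:E) +
        (\int[lebesgue_measure]_(y in `]-oo, 0%R[)
            (h (fine (P [set w | y <= Y w])) - 1)%:E))%E.

Definition expect (Y : Om -> R) : R := fine (\int[P]_w (Y w)%:E).

Variables (X : Om -> R) (M : R) (T : R -> R).

Definition IL (I : R -> R) : Prop :=
  [/\ (forall x, 0 <= x <= M -> 0 <= I x <= M),
      I 0 = 0 &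
      (forall x1 x2, 0 <= x2 -> x2 <= x1 -> x1 <= M ->
          0 <= I x1 - I x2 <= x1 - x2)].

Definition rhoPol (Z : Om -> R) : R := choquet T Z.
Definition Pi (g : R -> R) (I : R -> R) : R := choquet g (fun w => I (X w)).

Definition rho_mech (I g : R -> R) : R :=
  rhoPol (fun w => X w - I (X w) + Pi g I).
Definition V_mech (I g : R -> R) : R := Pi g I - expect (fun w => I (X w)).

Definition is_best_response (I g : R -> R) : Prop :=
  IL I /\ forall J, IL J -> rho_mech I g <= rho_mech J g.

Definition stackelberg (Is gs : R -> R) : Prop :=
  [/\ distortion gs, is_best_response Is gs &
      forall I g, distortion g -> is_best_response I g ->
        V_mech I g <= V_mech Is gs].

Definition rho_con (I : R -> R) (pi : R) : R :=
  rhoPol (fun w => X w - I (X w) + pi).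
Definition V_con (I : R -> R) (pi : R) : R := pi - expect (fun w => I (X w)).

Definition individually_rational (I : R -> R) (pi : R) : Prop :=
  rho_con I pi <= rho_con (fun _ => 0) 0 /\ V_con I pi >= V_con (fun _ => 0) 0.

Definition pareto_optimal (I : R -> R) (pi : R) : Prop :=
  ~ exists J pj, [/\ IL J, rho_con J pj <= rho_con I pi,
                    V_con J pj >= V_con I pi &
                    rho_con J pj < rho_con I pi \/ V_con J pj > V_con I pi].
End Defs.

(* An admissible indemnity J is nondecreasing and 1-Lipschitz on [0, M], so
   X, J(X) and X - J(X) are all of the form psi(X) with psi of slope in [0, 1].
   For such psi the upper level sets of y |-> h(P(psi(X) >= y)) are intervals
   ending at psi(q(u)), where q is the h-distorted quantile of X; by the layer-cake
   formula the Choquet integral of psi(X) is then the integral of psi(q(u)) over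
   [0, 1[.  This integral is linear in psi, so rho(X - J(X) + c) =
   rho(X) - Pi_T(J) + c.  Consequently, pricing with T makes every indemnity a best
   response, hence the leader's value is at least Pi_T(J) - E[J(X)] for every J.
   For the equilibrium (I, g), comparing this with the follower's preference of
   I over 0 forces Pi_g(I) = Pi_T(I): the policyholder is exactly indifferent, and
   a contract improving either side would beat the leader's value bound. *)

From HB Require Import structures.
From mathcomp Require Import all_boot all_order all_algebra.
From mathcomp Require Import all_classical all_reals all_analysis measurable_realfun.
From mathcomp Require Import ring lra.
Import Order.TTheory GRing.Theory Num.Theory.
Import numFieldNormedType.Exports.
Local Open Scope classical_set_scope.
Local Open Scope ring_scope.

Section LevelSets.
Context {R : realType} {d : measure_display} {T : measurableType d}.

Lemma measurable_ge_level {f : T -> R} (y : R) : measurable_fun setT f ->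
  measurable [set x | y <= f x].
Proof.
move=> mf; rewrite -[X in measurable X]setTI (_ : [set x | y <= f x] = f @^-1` `[y, +oo[).
  exact: mf measurableT _ (measurable_itv _).
by apply/seteqP; split => x /=; rewrite in_itv /= andbT.
Qed.

Lemma measurable_gt_level {f : T -> R} (y : R) : measurable_fun setT f ->
  measurable [set x | y < f x].
Proof.
move=> mf; rewrite -[X in measurable X]setTI (_ : [set x | y < f x] = f @^-1` `]y, +oo[).
  exact: mf measurableT _ (measurable_itv _).
by apply/seteqP; split => x /=; rewrite in_itv /= andbT.
Qed.

End LevelSets.

Section ProbabilityFine.
Context {R : realType} {d : measure_display} {Om : measurableType d}.
Variable P : probability Om R.

Lemma fine_probability_itv {A : set Om} : measurable A -> 0 <= fine (P A) <= 1.
Proof.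
move=> mA; rewrite fine_ge0 ?measure_ge0//=.
by rewrite -lee_fin fineK ?fin_num_measure// probability_le1.
Qed.

Lemma le_fine_probability {A B : set Om} : measurable A -> measurable B -> A `<=` B ->
  fine (P A) <= fine (P B).
Proof.
move=> mA mB AB; rewrite fine_le ?fin_num_measure//.
by apply: le_measure; rewrite ?inE.
Qed.

Lemma probability_inhabited : inhabited Om.
Proof.
apply: contrapT => noOm; have /eqP := probability_setT P.
suff -> : [set: Om] = set0 by rewrite measure0 eqe eq_sym oner_eq0.
by apply/seteqP; split => // w; have := noOm (inhabits w).
Qed.

Lemma probability_bound_le {Y : Om -> R} {a b : R} : (forall w, a <= Y w <= b) -> a <= b.
Proof. by case: probability_inhabited => w /(_ w) /andP[/le_trans]; apply. Qed.

End ProbabilityFine.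

Section BoundedIntervals.
Context {R : realType}.

Lemma lebesgue_measure_bounded_itv (a b : R) (b0 b1 : bool) : a <= b ->
  lebesgue_measure [set` Interval (BSide b0 a) (BSide b1 b)] = (b - a)%:E.
Proof.
rewrite le_eqVlt => /orP[/eqP<-|ab]; rewrite lebesgue_measure_itv/= lte_fin.
  by rewrite ltxx subrr.
by rewrite ab EFinB.
Qed.

Lemma lebesgue_measure_bounded_itv_lty (a b : R) (b0 b1 : bool) :
  (lebesgue_measure [set` Interval (BSide b0 a) (BSide b1 b)] < +oo)%E.
Proof. by rewrite lebesgue_measure_itv/=; case: ifP => _; rewrite ?ltry. Qed.

Lemma integrable_bounded_itv (a b : R) (b0 b1 : bool) (f : R -> R) (K : R) :
  let I := [set` Interval (BSide b0 a) (BSide b1 b)] in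
  measurable_fun I f -> (forall x, I x -> `|f x| <= K) ->
  lebesgue_measure.-integrable I (EFin \o f).
Proof.
move=> I mf fK; apply: measurable_bounded_integrable => //; first exact: measurable_itv.
  exact: lebesgue_measure_bounded_itv_lty.
exists K; split; first exact: num_real.
by move=> K' KK' x Ix /=; rewrite (le_trans (fK x Ix)) ?ltW.
Qed.

Lemma Rintegral_cst_itv01 (c : R) : \int[lebesgue_measure]_(u in `[0%R, 1%R[) c = c.
Proof.
rewrite Rintegral_cst//.
have -> : fine (lebesgue_measure (`[0%R, 1%R[ : set R)) = 1.
  by rewrite lebesgue_measure_bounded_itv//= subr0.
by rewrite mulr1.
Qed.

End BoundedIntervals.

Section LayerCake.
Context {R : realType} {d : measure_display} {T : measurableType d}.
Variable mu : {sigma_finite_measure set T -> \bar R}.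

Lemma layer_cake (D : set T) (f : T -> R) : measurable D ->
  measurable_fun setT f -> (forall y, D y -> 0 <= f y <= 1) ->
  (\int[mu]_(y in D) (f y)%:E =
   \int[lebesgue_measure]_(u in `[0%R, 1%R[) mu (D `&` [set y | (u < f y)%R]))%E.
Proof.
move=> mD mf f01.
pose E := [set p : T * R | [/\ D p.1, 0 <= p.2 < 1 & p.2 < f p.1]].
have mE : measurable E.
  have -> : E = (D `*` `[0%R, 1%R[) `&`
      (setT `&` (fun p => f p.1 - p.2) @^-1` `]0%R, +oo[).
    apply/seteqP; split => -[y u]; rewrite /E /= !in_itv /= ?andbT ?subr_gt0.
      by case.
    by case=> -[? ?] [_ ?].
  apply: measurableI; first by apply: measurableX => //; exact: measurable_itv.
  apply: measurable_funB measurableT _ (measurable_itv _).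
    exact: measurableT_comp mf measurable_fst.
  exact: measurable_snd.
pose g p := ((\1_E p : R)%:E).
have mg : measurable_fun setT g by apply/measurable_EFinP; exact: measurable_indic.
have g0 p : (0 <= g p)%E by rewrite lee_fin.
transitivity (\int[mu]_y \int[lebesgue_measure]_u g (y, u))%E.
  rewrite integral_mkcond; apply: eq_integral => y _; rewrite patchE.
  case: ifPn => [/set_mem Dy|/negP Dy]; last first.
    by rewrite integral0_eq// => u _; rewrite /g indicE memNset// => -[/mem_set/Dy].
  have /andP[fy0 fy1] := f01 _ Dy.
  transitivity (\int[lebesgue_measure]_u (\1_`[0%R, f y[ u : R)%:E)%E.
    rewrite integral_indic; [|exact: measurableT|exact: measurable_itv]; rewrite setIT.
    symmetry; etransitivity; first exact: (lebesgue_measure_bounded_itv _ _ true true fy0).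
    by rewrite subr0.
  apply: eq_integral => u _; congr EFin; rewrite !indicE.
  congr ((nat_of_bool _)%:R); apply/idP/idP => /set_mem.
    rewrite /= in_itv/= => /andP[u0 uf]; apply/mem_set.
    by split => //; rewrite u0 /=; exact: lt_le_trans uf fy1.
  by case=> _ /andP[u0 _] uf; apply/mem_set; rewrite /= in_itv/= u0.
rewrite fubini_tonelli// [RHS]integral_mkcond; apply: eq_integral => u _.
rewrite patchE; case: ifPn => [/set_mem|/negP uI]; last first.
  by rewrite integral0_eq// => y _; rewrite /g indicE memNset// => -[_ /mem_set/uI].
rewrite /= in_itv/= => uI.
rewrite -[X in mu X]setIT -integral_indic//; last first.
  by apply: measurableI => //; exact: measurable_gt_level.
apply: eq_integral => y _; congr EFin; rewrite !indicE.
congr ((nat_of_bool _)%:R); apply/idP/idP => /set_mem.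
  by case=> Dy _ uf; apply/mem_set.
by case=> Dy uf; apply/mem_set.
Qed.

End LayerCake.

Section Slope01.
Context {R : realType}.

Definition slope01 (M : R) (psi : R -> R) : Prop :=
  forall x1 x2, 0 <= x2 -> x2 <= x1 -> x1 <= M -> 0 <= psi x1 - psi x2 <= x1 - x2.

Context {M : R} {psi : R -> R}.
Hypothesis psi_slope : slope01 M psi.

Lemma slope01_le {x y : R} : 0 <= x -> x <= y -> y <= M -> psi x <= psi y.
Proof. by move=> x0 xy yM; have /andP[] := psi_slope y x x0 xy yM; rewrite subr_ge0. Qed.

Lemma slope01_lipschitz {x y : R} : 0 <= x -> x <= y -> y <= M -> psi y - psi x <= y - x.
Proof. by move=> x0 xy yM; have /andP[] := psi_slope y x x0 xy yM. Qed.

Lemma slope01_norm_le {x : R} : 0 <= x <= M -> `|psi x| <= `|psi 0| + `|psi M|.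
Proof.
move=> /andP[x0 xM]; have := slope01_le (lexx 0) x0 xM; have := slope01_le x0 xM (lexx M).
rewrite ler_norml; have := ler_norm (psi M); have := ler_norm (- psi 0).
by rewrite normrN; have := normr_ge0 (psi 0); have := normr_ge0 (psi M); move=> *; lra.
Qed.

End Slope01.

Section DistortedSurvival.
Context {R : realType} {d : measure_display} {Om : measurableType d}.
Variables (P : probability Om R) (h : R -> R).
Hypothesis h01 : forall x, 0 <= x <= 1 -> 0 <= h x <= 1.
Hypothesis h_nondecreasing : forall x y, 0 <= x -> x <= y -> y <= 1 -> h x <= h y.
Hypothesis h0 : h 0 = 0.
Hypothesis h1 : h 1 = 1.

Definition distorted_survival (Z : Om -> R) (y : R) : R :=
  h (fine (P [set w | y <= Z w])).

Local Notation Sh := distorted_survival.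

Lemma distorted_survival_itv (Z : Om -> R) y : measurable_fun setT Z -> 0 <= Sh Z y <= 1.
Proof. by move=> mZ; apply/h01/fine_probability_itv/measurable_ge_level. Qed.

Lemma le_distorted_survival (Z Z' : Om -> R) (y y' : R) :
  measurable_fun setT Z -> measurable_fun setT Z' ->
  (forall w, y' <= Z' w -> y <= Z w) -> Sh Z' y' <= Sh Z y.
Proof.
move=> mZ mZ' ZZ'; have mA := measurable_ge_level y mZ.
have mA' := measurable_ge_level y' mZ'.
have /andP[A'0 _] := fine_probability_itv P mA'.
have /andP[_ A1] := fine_probability_itv P mA.
by apply: h_nondecreasing => //; apply: le_fine_probability.
Qed.

Lemma distorted_survival_nonincreasing (Z : Om -> R) : measurable_fun setT Z ->
  {homo Sh Z : y y' /~ y <= y'}.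
Proof. by move=> mZ y y' yy'; apply: le_distorted_survival => // w; apply: le_trans. Qed.

Lemma measurable_distorted_survival {Z : Om -> R} {D : set R} :
  measurable_fun setT Z -> measurable D -> measurable_fun D (Sh Z).
Proof.
move=> mZ mD; apply: nonincreasing_measurable => // y y' yy'.
exact: distorted_survival_nonincreasing mZ _ _ yy'.
Qed.

Lemma distorted_survival_above (Z : Om -> R) y : (forall w, Z w < y) -> Sh Z y = 0.
Proof.
move=> Zy; rewrite /Sh (_ : [set w | y <= Z w] = set0) ?measure0//=.
by apply/seteqP; split => // w /=; rewrite leNgt Zy.
Qed.

Lemma distorted_survival_below (Z : Om -> R) y : (forall w, y <= Z w) -> Sh Z y = 1.
Proof.
move=> Zy; rewrite /Sh (_ : [set w | y <= Z w] = setT) ?probability_setT//=.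
by apply/seteqP; split => // w _; exact: Zy.
Qed.

Section Window.
Variables (Z : Om -> R) (L : R).
Hypotheses (mZ : measurable_fun setT Z) (L0 : 0 <= L).
Hypothesis ZL : forall w, - L <= Z w <= L.

Let measurable_Sh (D : set R) : measurable D -> measurable_fun D (EFin \o Sh Z).
Proof. by move=> mD; apply/measurable_EFinP; exact: measurable_distorted_survival. Qed.

Let integrable_Sh (a b : R) (b0 b1 : bool) :
  lebesgue_measure.-integrable [set` Interval (BSide b0 a) (BSide b1 b)] (EFin \o Sh Z).
Proof.
apply: (@integrable_bounded_itv _ _ _ _ _ _ 1).
  exact: measurable_distorted_survival.
by move=> y _; have /andP[? ?] := distorted_survival_itv Z y mZ; rewrite ger0_norm.
Qed.

Lemma integral_distorted_survival_ge0 :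
  (\int[lebesgue_measure]_(y in `[0%R, +oo[) (Sh Z y)%:E =
   \int[lebesgue_measure]_(y in `[0%R, L]) (Sh Z y)%:E)%E.
Proof.
rewrite (@itv_bndbnd_setU _ _ (BLeft 0) (BRight L) (BInfty _ false)) ?bnd_simp//.
rewrite integral_setU //; last 2 first.
- by apply: measurable_Sh; exact: measurableU.
- by apply/disj_setPS => y [/=]; rewrite !in_itv/= => /andP[_ yL] /andP[/lt_le_trans/(_ yL)]; rewrite ltxx.
rewrite [X in (_ + X)%E]integral0_eq ?adde0// => y.
rewrite /= in_itv/= andbT => Ly; rewrite distorted_survival_above// => w.
by have /andP[_ ZwL] := ZL w; apply: le_lt_trans Ly.
Qed.

Lemma integral_distorted_survival_lt0 :
  (\int[lebesgue_measure]_(y in `]-oo, 0%R[) (Sh Z y - 1)%:E =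
   \int[lebesgue_measure]_(y in `[(- L)%R, 0%R[) (Sh Z y)%:E - L%:E)%E.
Proof.
rewrite (@itv_bndbnd_setU _ _ (BInfty _ true) (BLeft (- L)) (BLeft 0)) ?bnd_simp ?oppr_le0//.
rewrite integral_setU //; last 2 first.
- apply/measurable_EFinP/measurable_funB => //.
  by apply: (measurable_distorted_survival mZ); exact: measurableU.
- by apply/disj_setPS => y [/=]; rewrite !in_itv/= => yL /andP[/(lt_le_trans yL)]; rewrite ltxx.
rewrite [X in (X + _)%E]integral0_eq ?add0e => [|y]; last first.
  rewrite /= in_itv/= => yL; rewrite distorted_survival_below ?subrr// => w.
  by have /andP[LZw _] := ZL w; apply: ltW (lt_le_trans yL LZw).
under eq_integral do rewrite EFinB.
rewrite integralB_EFin //; last first.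
  apply: (@integrable_bounded_itv _ _ _ _ _ (cst 1) 1) => // x _.
  by rewrite normr1.
by rewrite integral_cst //= mul1e lebesgue_measure_bounded_itv ?oppr_le0// sub0r opprK.
Qed.

Lemma choquet_window : choquet P h Z =
  fine (\int[lebesgue_measure]_(y in `[(- L)%R, L]) (Sh Z y)%:E)%E - L.
Proof.
rewrite /choquet -/(Sh Z) integral_distorted_survival_ge0 integral_distorted_survival_lt0.
rewrite [in RHS](@itv_bndbnd_setU _ _ (BLeft (- L)) (BLeft 0) (BRight L)) ?bnd_simp ?oppr_le0//.
rewrite integral_setU //; last 2 first.
- by apply: measurable_Sh; exact: measurableU.
- by apply/disj_setPS => y [/=]; rewrite !in_itv/= => /andP[_ y0] /andP[/(lt_le_trans y0)]; rewrite ltxx.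
have fin_pos : (\int[lebesgue_measure]_(y in `[0%R, L]) (Sh Z y)%:E)%E \is a fin_num.
  by apply: integrable_fin_num => //; exact: integrable_Sh.
have fin_neg : (\int[lebesgue_measure]_(y in `[(- L)%R, 0%R[) (Sh Z y)%:E)%E \is a fin_num.
  by apply: integrable_fin_num => //; exact: integrable_Sh.
rewrite -(fineK fin_pos) -(fineK fin_neg) -EFinB -!EFinD /=; ring.
Qed.

End Window.

Lemma choquet0 : choquet P h (fun _ => 0) = 0.
Proof.
by rewrite (@choquet_window _ 0) ?oppr0 ?lexx// set_itv1 integral_set1//= addr0.
Qed.

Section Quantile.
Variables (X : Om -> R) (M : R).
Hypotheses (mX : measurable_fun setT X) (X0M : forall w, 0 <= X w <= M).

Let M0 : 0 <= M := probability_bound_le P X0M.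

Let Sh_X0 : Sh X 0 = 1.
Proof. by apply: distorted_survival_below => w; have /andP[] := X0M w. Qed.

(* For u >= 1 the set is empty and sup returns 0, which keeps q nonincreasing on all of R. *)
Definition distorted_quantile (u : R) : R := sup [set x | 0 <= x <= M /\ u < Sh X x].

Local Notation q := distorted_quantile.

Let quantile_set_ubound u : ubound [set x | 0 <= x <= M /\ u < Sh X x] M.
Proof. by move=> x [/andP[]]. Qed.

Lemma distorted_quantile_ge {u x : R} : 0 <= x <= M -> u < Sh X x -> x <= q u.
Proof. by move=> xM ux; apply: ub_le_sup; [exists M; exact: quantile_set_ubound|]. Qed.

Lemma distorted_quantile_itv u : 0 <= q u <= M.
Proof.
rewrite /q; set S := [set x | _].
have [->|/set0P[x [xM ux]]] := eqVneq S set0; first by rewrite sup0 lexx M0.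
have /andP[x0 _] := xM; rewrite (le_trans x0 (distorted_quantile_ge xM ux))/=.
by apply: ge_sup; [exists x|exact: quantile_set_ubound].
Qed.

Lemma distorted_quantile_nonincreasing : {homo q : u u' /~ u <= u'}.
Proof.
move=> u' u uu'; rewrite {1}/q; set S := [set x | _].
have [->|/set0P neS] := eqVneq S set0.
  by rewrite sup0; have /andP[] := distorted_quantile_itv u.
apply: ge_sup => // x [xM u'x].
exact: distorted_quantile_ge xM (le_lt_trans uu' u'x).
Qed.

Section Comonotone.
Context {psi : R -> R}.
Hypothesis psi_slope : slope01 M psi.

Lemma measurable_slope01_comp : measurable_fun setT (psi \o X).
Proof.
pose clamp x := Num.min (Num.max x 0) M.
have clamp_itv x : 0 <= clamp x <= M.
  by rewrite le_min M0 le_max lexx orbT /= ge_min lexx orbT.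
have -> : psi \o X = (psi \o clamp) \o X.
  apply/funext => w /=; have /andP[X0 XM] := X0M w.
  by rewrite /clamp (max_l X0) (min_l XM).
apply: measurableT_comp => //; apply: nondecreasing_measurable => // x y xy /=.
have /andP[cx0 _] := clamp_itv x; have /andP[_ cyM] := clamp_itv y.
by apply: (slope01_le psi_slope) => //; apply: le_min2 => //; exact: le_max2.
Qed.

Lemma distorted_survival_comp_gt {u y : R} : u < 1 -> y < psi (q u) ->
  u < Sh (psi \o X) y.
Proof.
move=> u1 yq; have has_sup_S : has_sup [set x | 0 <= x <= M /\ u < Sh X x].
  by split; [exists 0; split; [exact/andP|rewrite Sh_X0]|exists M; exact: quantile_set_ubound].
have [x [xM ux] qx] := sup_adherent (eps := psi (q u) - y) ltac:(lra) has_sup_S.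
have /andP[x0 _] := xM; have xq := distorted_quantile_ge xM ux.
have /andP[_ qM] := distorted_quantile_itv u.
have yx : y < psi x.
  have : q u - (psi (q u) - y) < x := qx.
  by have := slope01_lipschitz psi_slope x0 xq qM; lra.
apply: lt_le_trans ux _; apply: le_distorted_survival => //; first exact: measurable_slope01_comp.
move=> w xw /=; have /andP[_ XM] := X0M w.
exact: le_trans (ltW yx) (slope01_le psi_slope x0 xw XM).
Qed.

Lemma distorted_survival_comp_le {u y : R} : 0 <= u -> psi (q u) < y ->
  Sh (psi \o X) y <= u.
Proof.
move=> u0 qy; have /andP[q0 qM] := distorted_quantile_itv u.
pose x := q u + (y - psi (q u)); have qx : q u < x by rewrite /x; lra.
have Sh_x : Sh X x <= u.
  have [xM|Mx] := leP x M.
    rewrite leNgt; apply/negP => /(@distorted_quantile_ge u x).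
    by rewrite xM (le_trans q0 (ltW qx)) leNgt qx => /(_ isT).
  by rewrite distorted_survival_above// => w; have /andP[_ XM] := X0M w; exact: le_lt_trans XM Mx.
apply: le_trans Sh_x; apply: le_distorted_survival => //; first exact: measurable_slope01_comp.
move=> w /= yw; have /andP[X0 XM] := X0M w.
have [Xq|qX] := leP (X w) (q u).
  by have := slope01_le psi_slope X0 Xq qM; lra.
by have := slope01_lipschitz psi_slope q0 (ltW qX) XM; rewrite /x; lra.
Qed.

Lemma lebesgue_measure_level_set L u : 0 <= u < 1 -> - L <= psi 0 -> psi M <= L ->
  lebesgue_measure (`[(- L)%R, L] `&` [set y | u < Sh (psi \o X) y]) =
  (psi (q u) + L)%:E.
Proof.
move=> /andP[u0 u1] L0 LM; have /andP[q0 qM] := distorted_quantile_itv u.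
have Lq : - L <= psi (q u) := le_trans L0 (slope01_le psi_slope (lexx 0) q0 qM).
have qL : psi (q u) <= L := le_trans (slope01_le psi_slope q0 qM (lexx M)) LM.
have mS : measurable (`[(- L)%R, L] `&` [set y | u < Sh (psi \o X) y]).
  apply: measurableI => //; apply: measurable_gt_level.
  exact: measurable_distorted_survival measurable_slope01_comp measurableT.
have -> : (psi (q u) + L)%:E = lebesgue_measure `[(- L)%R, psi (q u)].
  by rewrite lebesgue_measure_bounded_itv// opprK.
apply/le_anti/andP; split.
  apply: le_measure; rewrite ?inE// => y [/=]; rewrite !in_itv/= => /andP[-> _] uy.
  by rewrite leNgt; apply/negP => /(distorted_survival_comp_le u0); rewrite leNgt uy.
rewrite lebesgue_measure_bounded_itv// -(lebesgue_measure_bounded_itv _ _ false true Lq).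
apply: le_measure; rewrite ?inE// => y /=; rewrite !in_itv/= => /andP[Ly yq]; split.
  by rewrite (ltW Ly) (le_trans (ltW yq) qL).
exact: distorted_survival_comp_gt.
Qed.

Lemma measurable_quantile_comp (D : set R) : measurable D -> measurable_fun D (psi \o q).
Proof.
move=> mD; apply: nonincreasing_measurable => // u u' uu' /=.
have /andP[q0 _] := distorted_quantile_itv u'; have /andP[_ qM] := distorted_quantile_itv u.
exact: (slope01_le psi_slope q0 (distorted_quantile_nonincreasing _ _ uu') qM).
Qed.

Lemma integrable_quantile_comp :
  lebesgue_measure.-integrable `[0%R, 1%R[ (EFin \o (psi \o q)).
Proof.
apply: (integrable_bounded_itv _ _ _ _ _ (`|psi 0| + `|psi M|)).
  exact: measurable_quantile_comp.
by move=> u _; exact: (slope01_norm_le psi_slope (distorted_quantile_itv u)).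
Qed.

Lemma choquet_quantile : choquet P h (psi \o X) =
  \int[lebesgue_measure]_(u in `[0%R, 1%R[) psi (q u).
Proof.
pose L := `|psi 0| + `|psi M|.
have psiL x : 0 <= x <= M -> - L <= psi x <= L.
  by move=> /(slope01_norm_le psi_slope); rewrite ler_norml.
have /andP[L0 _] : - L <= psi 0 <= L by apply: psiL; rewrite lexx M0.
have /andP[_ LM] : - L <= psi M <= L by apply: psiL; rewrite lexx M0.
rewrite (@choquet_window _ L measurable_slope01_comp) ?addr_ge0// => [|w]; last exact: psiL.
rewrite layer_cake//; first last.
- by move=> y _; apply: distorted_survival_itv; exact: measurable_slope01_comp.
- exact: measurable_distorted_survival measurable_slope01_comp measurableT.
transitivity (\int[lebesgue_measure]_(u in `[0%R, 1%R[) (psi (q u) + L) - L).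
  congr (fine _ - _); apply: eq_integral => u; rewrite inE/= in_itv/= => u01.
  exact: lebesgue_measure_level_set.
rewrite RintegralD//; first last.
- by apply: (@integrable_bounded_itv _ _ _ _ _ (cst L) `|L|) => // x _.
- exact: integrable_quantile_comp.
by rewrite Rintegral_cst_itv01 addrK.
Qed.

End Comonotone.

Lemma choquet_retention (J : R -> R) (c : R) : slope01 M J ->
  choquet P h (fun w => X w - J (X w) + c) =
  choquet P h X - choquet P h (fun w => J (X w)) + c.
Proof.
move=> J_slope.
have id_slope : slope01 M id by move=> x1 x2 _ x21 _; rewrite lexx subr_ge0 x21.
have retained_slope : slope01 M (fun x => x - J x).
  move=> x1 x2 x20 x21 x1M; have /andP[] := J_slope x1 x2 x20 x21 x1M.
  by move=> *; apply/andP; split; lra.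
have retained_slope_c : slope01 M (fun x => x - J x + c).
  move=> x1 x2 x20 x21 x1M; have /andP[] := retained_slope x1 x2 x20 x21 x1M.
  by move=> *; apply/andP; split; lra.
rewrite (choquet_quantile retained_slope_c) (choquet_quantile id_slope).
rewrite (choquet_quantile J_slope) RintegralD//; first last.
- by apply: (@integrable_bounded_itv _ _ _ _ _ (cst c) `|c|) => // x _.
- exact: (integrable_quantile_comp retained_slope).
rewrite RintegralB//; first last.
- exact: (integrable_quantile_comp J_slope).
- exact: (integrable_quantile_comp id_slope).
by rewrite Rintegral_cst_itv01.
Qed.

End Quantile.
End DistortedSurvival.

Section Contracts.
Context {R : realType} {d : measure_display} {Om : measurableType d}.
Variable P : probability Om R.
Context {X : Om -> R} {M : R} {T : R -> R}.
Hypotheses (mX : measurable_fun setT X) (X0M : forall w, 0 <= X w <= M).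
Hypothesis T_distortion : distortion T.

Lemma Pi_zero {g : R -> R} : distortion g -> Pi P X g (fun _ => 0) = 0.
Proof. by case=> g01 g_nd g0 g1 _; exact: choquet0. Qed.

Lemma IL_zero : 0 <= M -> IL M (fun _ => 0).
Proof.
by move=> M0; split=> // [x _|x1 x2 _ x21 _]; rewrite ?lexx ?M0// subrr lexx subr_ge0.
Qed.

Lemma rho_conE (J : R -> R) (c : R) : IL M J ->
  rho_con P X T J c = rhoPol P T X - Pi P X T J + c.
Proof. by case: T_distortion => T01 T_nd T0 T1 _ [_ _ J_slope]; exact: choquet_retention. Qed.

Lemma rho_mechE (J g : R -> R) : rho_mech P X T J g = rho_con P X T J (Pi P X g J).
Proof. by []. Qed.

Lemma best_response_fair_pricing {J : R -> R} : IL M J -> is_best_response P X M T J T.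
Proof.
move=> J_IL; split=> [|J' J'_IL]; first exact: J_IL.
by rewrite !rho_mechE (rho_conE _ _ J_IL) (rho_conE _ _ J'_IL) !subrK.
Qed.

End Contracts.

Theorem proposition2 (R : realType) (d : measure_display) (Om : measurableType d)
  (P : probability Om R) (X : Om -> R) (M : R) (T Is gs : R -> R) :
  nonatomic P ->
  measurable_fun setT X ->
  (forall w, 0 <= X w <= M) ->
  (forall x y, 0 <= x -> x < y -> y <= M ->
     fine (P [set w | X w <= x]) < fine (P [set w | X w <= y])) ->
  distortion T ->
  stackelberg P X M T Is gs ->
  let pis := Pi P X gs Is in
  [/\ individually_rational P X T Is pis,
      pareto_optimal P X M T Is pis &
      rho_con P X T Is pis = rho_con P X T (fun _ => 0) 0].
Proof.
move=> _ mX X0M _ T_dist [gs_dist [Is_IL Is_best] V_max] pis.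
have IL0 := IL_zero (probability_bound_le P X0M); have rhoE := rho_conE P mX X0M T_dist.
have Pi_gs0 : Pi P X gs (fun _ => 0) = 0 := Pi_zero P gs_dist.
have Pi_T0 : Pi P X T (fun _ => 0) = 0 := Pi_zero P T_dist.
have V_fair J : IL M J -> V_mech P X J T <= V_mech P X Is gs.
  by move=> J_IL; exact: (V_max _ _ T_dist (best_response_fair_pricing P mX X0M T_dist J_IL)).
have Pi_gs_le : Pi P X gs Is <= Pi P X T Is.
  by have := Is_best _ IL0; rewrite !rho_mechE (rhoE _ _ Is_IL) (rhoE _ _ IL0) Pi_gs0 Pi_T0; lra.
have Pi_T_le : Pi P X T Is <= Pi P X gs Is.
  by have := V_fair _ Is_IL; rewrite /V_mech; lra.
have rho_Is : rho_con P X T Is pis = rho_con P X T (fun _ => 0) 0.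
  by rewrite (rhoE _ _ Is_IL) (rhoE _ _ IL0) Pi_T0 /pis; lra.
split; first split.
- by rewrite rho_Is.
- by have := V_fair _ IL0; rewrite /V_mech /V_con Pi_T0.
- move=> [J [pj [J_IL rhoJ VJ strict]]]; have := V_fair _ J_IL.
  move: rhoJ VJ strict; rewrite rho_Is /V_mech /V_con (rhoE _ _ J_IL) (rhoE _ _ IL0) Pi_T0 /pis.
  by move=> ? ? [?|?] ?; lra.
- exact: rho_Is.
Qed.
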